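(* Let $(G,+,0,\ge)$ be a linearly ordered Abelian group and let $n$ be a natural number. Then every nonnegative sum-symmetric matrix $T\in G^{n\times n}$ is the sum of finitely many nonnegative circuit matrices in $G^{n\times n}$.
   Context: A linearly ordered Abelian group is an Abelian group $(G,+,0)$ with a linear (total) order $\ge$ on $G$ such that for all $a,b\in G$ one has $a\ge b$ if and only if $a-b\ge 0$. Write $[n]:=\{1,\dots,n\}$. A matrix $T=(t_{ij})_{i,j\in[n]}\in G^{n\times n}$ is nonnegative if all $t_{ij}\ge 0$. It is sum-symmetric if for each $i\in[n]$ the row sum $\sum_{j\in[n]}t_{ij}$ equals the column sum $\sum_{j\in[n]}t_{ji}$. A circuit matrix is a matrix $C^{J,\pi,c}=(c_{ij})_{i,j\in[n]}\in G^{n\times n}$ for which there exist $c\in G$, a set $J\subseteq[n]$ and a cyclic permutation $\pi$ of $J$ (a permutation of $J$ consisting of a single cycle through all elements of $J$) such that for all $i,j\in[n]$, $c_{ij}=c$ if $j=\pi(i)$ and $i\in J$, and $c_{ij}=0$ otherwise. The circuit matrix is nonnegative when $c\ge 0$. *)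

From mathcomp Require Import all_boot all_order all_algebra all_fingroup.
Set Implicit Arguments. Unset Strict Implicit. Unset Printing Implicit Defensive.
Import GRing.Theory.
Local Open Scope ring_scope.

Definition lin_ordered_abelian (G : zmodType) (ge : G -> G -> Prop) : Prop :=
  [/\ (forall a, ge a a),
      (forall a b, ge a b -> ge b a -> a = b),
      (forall a b c, ge a b -> ge b c -> ge a c),
      (forall a b, ge a b \/ ge b a) &
      (forall a b, ge a b <-> ge (a - b) 0)].

Definition nonneg_matrix (G : zmodType) (ge : G -> G -> Prop) (n : nat)
  (T : 'M[G]_n) : Prop := forall i j, ge (T i j) 0.

Definition sum_symmetric (G : zmodType) (n : nat) (T : 'M[G]_n) : Prop :=
  forall i, \sum_(j < n) T i j = \sum_(j < n) T j i.

(* pi is a cyclic permutation of J: pi is a permutation of [n] fixing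
   everything outside J (so it restricts to a permutation of J), and it
   consists of a single cycle through all elements of J. *)
Definition cyclic_perm_of (n : nat) (J : {set 'I_n}) (pi : {perm 'I_n}) : Prop :=
  perm_on J pi /\ (forall i, i \in J -> porbit pi i = J).

Definition circuit_mx (G : zmodType) (n : nat) (J : {set 'I_n})
  (pi : {perm 'I_n}) (c : G) : 'M[G]_n :=
  \matrix_(i, j) (if (i \in J) && (j == pi i) then c else 0).

Definition nonneg_circuit_matrix (G : zmodType) (ge : G -> G -> Prop) (n : nat)
  (C : 'M[G]_n) : Prop :=
  exists (c : G) (J : {set 'I_n}) (pi : {perm 'I_n}),
    [/\ cyclic_perm_of J pi, ge c 0 & C = circuit_mx J pi c].

From mathcomp Require Import all_boot all_order all_algebra all_fingroup.
Set Implicit Arguments. Unset Strict Implicit. Unset Printing Implicit Defensive.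
Import GRing.Theory.
Local Open Scope ring_scope.

(* Draw an edge i -> j whenever T i j > 0. Since T is nonnegative and
   sum-symmetric, a vertex with an incoming edge has an outgoing one, so
   following outgoing edges from any edge eventually closes a circuit. Removing
   the circuit matrix whose weight is the least entry of T along that circuit
   keeps T nonnegative and sum-symmetric and deletes at least one edge; induct
   on the number of edges. *)

Section LinearlyOrderedGroup.
Variables (G : zmodType) (ge : G -> G -> Prop).
Hypothesis HG : lin_ordered_abelian ge.

Lemma ge_refl a : ge a a.
Proof. by case: HG. Qed.

Lemma ge_anti a b : ge a b -> ge b a -> a = b.
Proof. by case: HG => _ anti _ _ _; apply: anti. Qed.

Lemma ge_trans a b c : ge a b -> ge b c -> ge a c.
Proof. by case: HG => _ _ trans _ _; apply: trans. Qed.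

Lemma ge_total a b : ge a b \/ ge b a.
Proof. by case: HG => _ _ _ total _; apply: total. Qed.

Lemma ge_subr0 a b : ge a b <-> ge (a - b) 0.
Proof. by case: HG => _ _ _ _ sub; apply: sub. Qed.

Lemma ge_add2r c a b : ge a b -> ge (a + c) (b + c).
Proof. by move=> /ge_subr0 ab; apply/ge_subr0; rewrite opprD addrACA subrr addr0. Qed.

Lemma ge0_add a b : ge a 0 -> ge b 0 -> ge (a + b) 0.
Proof.
move=> a_ge0 b_ge0; apply: ge_trans b_ge0.
by have := ge_add2r b a_ge0; rewrite add0r.
Qed.

Lemma ge0_sum (I : finType) (P : pred I) (F : I -> G) :
  (forall i, ge (F i) 0) -> ge (\sum_(i | P i) F i) 0.
Proof.
move=> F_ge0; apply: (big_ind (ge^~ 0)) => //; [exact: ge_refl | exact: ge0_add].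
Qed.

Lemma ge0_sum_eq0 (I : finType) (F : I -> G) :
  (forall i, ge (F i) 0) -> \sum_i F i = 0 -> forall i, F i = 0.
Proof.
move=> F_ge0 sumF0 i; apply: ge_anti (F_ge0 i) _.
move: sumF0; rewrite (bigD1 i) //= => /eqP; rewrite addr_eq0 => /eqP ->.
by apply/ge_subr0; rewrite sub0r opprK; apply: ge0_sum.
Qed.

Lemma exists_argmin (X : eqType) (g : X -> G) (s : seq X) :
  s != [::] -> exists2 z, z \in s & {in s, forall w, ge (g w) (g z)}.
Proof.
elim: s => // a s IH _; have [-> | s_nz] := eqVneq s [::].
  by exists a; rewrite ?mem_head // => w; rewrite inE => /eqP ->; apply: ge_refl.
have [z zs z_min] := IH s_nz.
have [az | za] := ge_total (g a) (g z).
- exists z; first by rewrite inE zs orbT.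
  by move=> w; rewrite inE => /predU1P[-> // | /z_min].
- exists a; first exact: mem_head.
  move=> w; rewrite inE => /predU1P[-> | /z_min wz]; first exact: ge_refl.
  exact: ge_trans wz za.
Qed.

End LinearlyOrderedGroup.

Section CyclePerm.
Variables (n : nat) (c : seq 'I_n).
Hypothesis c_uniq : uniq c.

Definition cycle_perm : {perm 'I_n} := perm (can_inj (prev_next c_uniq)).

Lemma cycle_permE : cycle_perm =1 next c.
Proof. by move=> x; rewrite permE. Qed.

Lemma cycle_perm_cyclic : cyclic_perm_of [set x in c] cycle_perm.
Proof.
have c_cycle : fcycle cycle_perm c.
  rewrite (@eq_cycle _ _ (frel (next c))) ?cycle_next // => x y.
  by rewrite /= cycle_permE.
split.
  apply/subsetP => x; rewrite !inE; apply: contraR => xc.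
  by rewrite cycle_permE next_nth (negbTE xc).
move=> x; rewrite inE => xc; apply/setP => y.
rewrite inE -(fconnect_cycle c_cycle xc).
apply/porbitP/idP => [[i ->] | /iter_findex <-]; first by rewrite permX fconnect_iter.
by exists (findex cycle_perm x y); rewrite permX.
Qed.

End CyclePerm.

Lemma cyclic_perm_in_orbit n (f : 'I_n -> 'I_n) x :
  exists J pi, [/\ cyclic_perm_of J pi, J != set0, {in J, pi =1 f}
                 & {subset J <= fconnect f x}].
Proof.
have /trajectP[m m_lt fm_loop] := looping_order f x.
set y := iter m f x.
have orbit_cycle : fcycle f (fingraph.orbit f y).
  apply: (iffLR (orbitPcycle 3 0)); exists (fingraph.order f x - m).-1.
  by rewrite prednK ?subn_gt0 // /y -iterD subnK ?fm_loop // ltnW.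
exists [set z in fingraph.orbit f y], (cycle_perm (orbit_uniq f y)); split.
- exact: cycle_perm_cyclic.
- by apply/set0Pn; exists y; rewrite inE in_orbit.
- by move=> z; rewrite inE => yz; rewrite cycle_permE (nextE orbit_cycle).
- move=> z; rewrite inE -fconnect_orbit.
  exact: connect_trans (fconnect_iter f m x).
Qed.

Section SumSymmetric.
Variables (G : zmodType) (n : nat).
Implicit Types T : 'M[G]_n.

Lemma sum_symmetricB T1 T2 :
  sum_symmetric T1 -> sum_symmetric T2 -> sum_symmetric (T1 - T2).
Proof.
move=> T1_sym T2_sym i; under eq_bigr do rewrite !mxE.
by under [RHS]eq_bigr do rewrite !mxE; rewrite !sumrB T1_sym T2_sym.
Qed.

Lemma circuit_mx_sum_symmetric (J : {set 'I_n}) (pi : {perm 'I_n}) (c : G) :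
  perm_on J pi -> sum_symmetric (circuit_mx J pi c).
Proof.
move=> pi_on i; under eq_bigr do rewrite mxE; under [RHS]eq_bigr do rewrite mxE.
have piVJ : ((pi^-1)%g i \in J) = (i \in J) by rewrite -(perm_closed _ pi_on) permKV.
rewrite (bigD1 (pi i)) // [RHS](bigD1 ((pi^-1)%g i)) //= permKV piVJ !eqxx !andbT.
rewrite !big1 // => j; last by move=> /negbTE ->; rewrite andbF.
move=> j_ne; case: ifP => // /andP[_ /eqP ij].
by move: j_ne; rewrite ij permK eqxx.
Qed.

End SumSymmetric.

Section CircuitDecomposition.
Variables (G : zmodType) (ge : G -> G -> Prop).
Hypothesis HG : lin_ordered_abelian ge.
Variable n : nat.
Implicit Types T : 'M[G]_n.

Definition support T := [set ij : 'I_n * 'I_n | T ij.1 ij.2 != 0].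

Lemma support_out_edge T k i : nonneg_matrix ge T -> sum_symmetric T ->
  T k i != 0 -> exists j, T i j != 0.
Proof.
move=> T_ge0 T_sym Tki.
have [j Tij | row0] := pickP (fun j => T i j != 0); first by exists j.
have col0 : \sum_j T j i = 0.
  by rewrite -T_sym big1 // => j _; apply/eqP/negbFE/row0.
by move: Tki; rewrite (ge0_sum_eq0 HG (fun j => T_ge0 j i) col0) eqxx.
Qed.

Lemma support_cycle T i0 j0 : nonneg_matrix ge T -> sum_symmetric T ->
  T i0 j0 != 0 ->
  exists J pi, [/\ cyclic_perm_of J pi, J != set0 & {in J, forall i, T i (pi i) != 0}].
Proof.
move=> T_ge0 T_sym Ti0j0.
pose has_out i := [exists j, T i j != 0].
pose f i := odflt i [pick j | T i j != 0].
have f_out i : has_out i -> T i (f i) != 0.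
  by rewrite /f; case: pickP => [// | row0] /existsP[j]; rewrite row0.
have f_closed i : has_out i -> has_out (f i).
  by move=> /f_out /support_out_edge[] // j Tj; apply/existsP; exists j.
have iter_out m : has_out (iter m f i0).
  by elim: m => [|m IH]; [apply/existsP; exists j0 | exact: f_closed].
have [J [pi [pi_cyclic J_nz pi_f J_orbit]]] := cyclic_perm_in_orbit f i0.
exists J, pi; split=> // i iJ; rewrite pi_f //; apply: f_out.
by have /iter_findex <- := J_orbit i iJ; apply: iter_out.
Qed.

Lemma peel_circuit T i0 j0 : nonneg_matrix ge T -> sum_symmetric T ->
  T i0 j0 != 0 ->
  exists2 C, nonneg_circuit_matrix ge C &
    [/\ nonneg_matrix ge (T - C), sum_symmetric (T - C)
      & support (T - C) \proper support T].
Proof.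
move=> T_ge0 T_sym Ti0j0.
have [J [pi [[pi_on pi_cyc] J_nz T_pi]]] := support_cycle T_ge0 T_sym Ti0j0.
have enumJ_nz : enum J != [::] by rewrite -size_eq0 -cardE cards_eq0.
have [i1 i1J i1_min] := exists_argmin HG (fun i => T i (pi i)) enumJ_nz.
rewrite mem_enum in i1J.
set c := T i1 (pi i1).
have pi_min i : i \in J -> ge (T i (pi i)) c.
  by move=> iJ; apply: i1_min; rewrite mem_enum.
exists (circuit_mx J pi c); first by exists c, J, pi; split=> //; apply: T_ge0.
have TCE i j : (T - circuit_mx J pi c) i j
               = T i j - (if (i \in J) && (j == pi i) then c else 0).
  by rewrite !mxE.
split.
- move=> i j; rewrite TCE; case: ifP => [/andP[iJ /eqP ->] | _].
    exact: (ge_subr0 HG _ _).1 (pi_min i iJ).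
  by rewrite subr0.
- exact/sum_symmetricB/circuit_mx_sum_symmetric.
- apply/properP; split.
    apply/subsetP => -[i j]; rewrite !inE /= TCE.
    by case: ifP => [/andP[iJ /eqP ->] _ | _]; [apply: T_pi | rewrite subr0].
  exists (i1, pi i1); rewrite !inE /=; first exact: T_pi.
  by rewrite TCE i1J eqxx subrr eqxx.
Qed.

End CircuitDecomposition.

Theorem theorem1 (G : zmodType) (ge : G -> G -> Prop)
  (HG : lin_ordered_abelian ge) (n : nat) (T : 'M[G]_n) :
  nonneg_matrix ge T -> sum_symmetric T ->
  exists s : seq 'M[G]_n,
    (forall C, C \in s -> nonneg_circuit_matrix ge C) /\
    T = \sum_(C <- s) C.
Proof.
have [k] := ubnP #|support T|; elim: k T => // k IH T T_lt T_ge0 T_sym.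
have [-> | /matrix0Pn[i [j Tij]]] := eqVneq T 0; first by exists [::]; rewrite big_nil.
have [C C_circuit [TC_ge0 TC_sym TC_lt]] := peel_circuit HG T_ge0 T_sym Tij.
have [s [s_circuits TC_sum]] :=
  IH (T - C) (leq_trans (proper_card TC_lt) T_lt) TC_ge0 TC_sym.
exists (C :: s); split; last by rewrite big_cons -TC_sum addrC subrK.
by move=> D; rewrite inE => /predU1P[-> | /s_circuits].
Qed.
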